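(* Let $S$ be a semigroup with finite $\mathcal{R}$-height, and let $A$ be a left ideal of $S$. Let $n$ be the maximum length of a chain of $\mathcal{R}$-classes of $S$ each of which intersects $A$. Then $\mathrm{H}_{\mathcal{R}}(A)\leq 2n$.
   Context: For a semigroup $S$, $S^1$ denotes $S$ with an identity adjoined if necessary. Green's preorder: $a\leq_{\mathcal{R}} b$ iff $aS^1\subseteq bS^1$; $\mathcal{R}$ is the associated equivalence. $\mathcal{R}$-classes are ordered by $R_a\leq R_b$ iff $a\leq_{\mathcal{R}} b$, and the $\mathcal{R}$-height $\mathrm{H}_{\mathcal{R}}(S)$ is the supremum of the cardinalities of chains of $\mathcal{R}$-classes. A left ideal is a non-empty subset $A$ with $SA\subseteq A$; $\mathrm{H}_{\mathcal{R}}(A)$ is computed in the semigroup $A$ itself. *)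

From Stdlib Require Import Arith.

Definition associative_op {T : Type} (mul : T -> T -> T) : Prop :=
  forall a b c, mul a (mul b c) = mul (mul a b) c.

Definition left_ideal {T : Type} (mul : T -> T -> T) (A : T -> Prop) : Prop :=
  (exists a, A a) /\ (forall s a, A a -> A (mul s a)).

(* x ∈ a X^1, computed inside the (sub)semigroup with carrier X:
   x = a, or x = a s for some s ∈ X. *)
Definition in_princ_right {T : Type} (mul : T -> T -> T) (X : T -> Prop)
  (a x : T) : Prop :=
  x = a \/ exists s, X s /\ x = mul a s.

Definition Rle {T : Type} (mul : T -> T -> T) (X : T -> Prop) (a b : T) : Prop :=
  forall x, in_princ_right mul X a x -> in_princ_right mul X b x.

Definition Rlt {T : Type} (mul : T -> T -> T) (X : T -> Prop) (a b : T) : Prop :=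
  Rle mul X a b /\ ~ Rle mul X b a.

(* Distinct R-classes of a chain are
   strictly ordered, so this is exactly a chain of R-classes of cardinality k
   each of which meets P. *)
Definition R_chain {T : Type} (mul : T -> T -> T) (X P : T -> Prop) (k : nat)
  : Prop :=
  exists f : nat -> T,
    (forall i, i < k -> P (f i)) /\
    (forall i, S i < k -> Rlt mul X (f i) (f (S i))).

(* H_R(X) <= N (as a natural number): every chain of R-classes has at most N
   elements.  (Since an infinite chain contains arbitrarily long finite ones,
   this is equivalent to the supremum of all chain cardinalities being <= N.) *)
Definition R_height_le {T : Type} (mul : T -> T -> T) (X : T -> Prop) (N : nat)
  : Prop :=
  forall k, R_chain mul X X k -> k <= N.

Definition finite_R_height {T : Type} (mul : T -> T -> T) (X : T -> Prop) : Prop :=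
  exists N, R_height_le mul X N.

(* In a left ideal A of S, two consecutive strict steps a <_A b <_A c force a <_R c
   in S: if c lay in a S^1, say c = a s, then b, lying in c A^1, would be a (s u)
   with s u in A, so b <=_A a.  Hence every other element of an R-chain of A is an
   R-chain of S meeting A, and a chain of length k in A yields one of length about
   k / 2 in S. *)
From Stdlib Require Import Arith Lia.

Section Semigroup.

Variables (T : Type) (mul : T -> T -> T).
Hypothesis mulA : associative_op mul.

Definition mul_closed (X : T -> Prop) : Prop :=
  forall s t, X s -> X t -> X (mul s t).

Lemma left_ideal_mul_closed (A : T -> Prop) : left_ideal mul A -> mul_closed A.
Proof. intros [_ HA] s t _ At; exact (HA s t At). Qed.

Lemma Rle_refl (X : T -> Prop) (a : T) : Rle mul X a a.
Proof. intros x Hx; exact Hx. Qed.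

Lemma Rle_trans (X : T -> Prop) (a b c : T) :
  Rle mul X a b -> Rle mul X b c -> Rle mul X a c.
Proof. intros Hab Hbc x Hx; auto. Qed.

Lemma Rle_in_princ_right (X : T -> Prop) (a b : T) :
  Rle mul X a b -> in_princ_right mul X b a.
Proof. intros Hab; apply Hab; left; reflexivity. Qed.

Lemma in_princ_right_Rle (X : T -> Prop) (a b : T) :
  mul_closed X -> in_princ_right mul X b a -> Rle mul X a b.
Proof.
  intros HX [-> | [t [Xt ->]]]; [apply Rle_refl |].
  intros x [-> | [s [Xs ->]]].
  - right; exists t; auto.
  - right; exists (mul t s); split; [apply HX; assumption | symmetry; apply mulA].
Qed.

Lemma in_princ_right_mono (X Y : T -> Prop) (a b : T) :
  (forall x, X x -> Y x) -> in_princ_right mul X a b -> in_princ_right mul Y a b.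
Proof. intros XY [-> | [t [Xt ->]]]; [left | right; exists t]; auto. Qed.

Lemma Rle_mono (X Y : T -> Prop) (a b : T) :
  mul_closed Y -> (forall x, X x -> Y x) -> Rle mul X a b -> Rle mul Y a b.
Proof.
  intros HY XY Hab; apply in_princ_right_Rle; [exact HY |].
  apply (in_princ_right_mono X); [exact XY | apply Rle_in_princ_right, Hab].
Qed.

Lemma in_princ_right_ideal_trans (A : T -> Prop) (a b c : T) :
  (forall s u, A u -> A (mul s u)) ->
  in_princ_right mul (fun _ => True) a c -> in_princ_right mul A c b ->
  b = c \/ in_princ_right mul A a b.
Proof.
  intros HA [-> | [s [_ ->]]] Hb; [now right |].
  destruct Hb as [-> | [u [Au ->]]]; [now left |].
  right; right; exists (mul s u); split; [apply HA, Au | symmetry; apply mulA].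
Qed.

Lemma Rlt_ideal_two_steps (A : T -> Prop) (a b c : T) :
  left_ideal mul A -> Rlt mul A a b -> Rlt mul A b c ->
  Rlt mul (fun _ => True) a c.
Proof.
  intros HA [Hab Hba] [Hbc Hcb].
  assert (Aclosed : mul_closed A) by exact (left_ideal_mul_closed A HA).
  split.
  - apply (Rle_mono A); [intros s t _ _; exact I | intros _ _; exact I |].
    exact (Rle_trans A a b c Hab Hbc).
  - intros Hca.
    destruct (in_princ_right_ideal_trans A a b c (proj2 HA)
                (Rle_in_princ_right _ c a Hca) (Rle_in_princ_right _ b c Hbc))
      as [-> | b_in_aA].
    + exact (Hcb (Rle_refl A c)).
    + exact (Hba (in_princ_right_Rle A b a Aclosed b_in_aA)).
Qed.

Lemma R_chain_ideal_halve (A P : T -> Prop) (k m : nat) :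
  left_ideal mul A -> R_chain mul A P k -> 2 * m <= S k ->
  R_chain mul (fun _ => True) P m.
Proof.
  intros HA [f [Pf f_chain]] Hm.
  exists (fun i => f (2 * i)); split.
  - intros i Hi; apply Pf; lia.
  - intros i Hi.
    replace (2 * S i) with (S (S (2 * i))) by lia.
    apply (Rlt_ideal_two_steps A _ (f (S (2 * i)))); [exact HA | apply f_chain; lia ..].
Qed.

End Semigroup.

Theorem theorem3p8 (T : Type) (mul : T -> T -> T) (Hassoc : associative_op mul)
  (HS : finite_R_height mul (fun _ => True))
  (A : T -> Prop) (HA : left_ideal mul A) (n : nat)
  (Hn_attained : R_chain mul (fun _ => True) A n)
  (Hn_max : forall k, R_chain mul (fun _ => True) A k -> k <= n) :
  R_height_le mul A (2 * n).
Proof.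
  intros k Hk.
  destruct (Nat.le_gt_cases k (2 * n)) as [Hle | Hgt]; [exact Hle | exfalso].
  assert (Hlong : R_chain mul (fun _ => True) A (S n)).
  { apply (R_chain_ideal_halve T mul Hassoc A A k); [exact HA | exact Hk | lia]. }
  specialize (Hn_max (S n) Hlong); lia.
Qed.
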